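(* Let $K\ge 2$, and fix $P_1^{\rm ST},\ldots,P_K^{\rm ST}>0$ and $\Gamma_1^{\rm ST},\ldots,\Gamma_M^{\rm ST}>0$. For a channel realization $\boldsymbol{\alpha}$ consider the problem $$\max_{p_1,\ldots,p_K}\ \log\Big(1+\sum_{k=1}^K h_kp_k\Big)\quad\text{s.t.}\quad p_k\le P_k^{\rm ST}\ \forall k,\quad \sum_{k=1}^K g_{km}p_k\le\Gamma_m^{\rm ST}\ \forall m,\quad p_k\ge0\ \forall k.$$ For almost every realization $\boldsymbol{\alpha}$: this problem has an optimal solution in which only one user $i$ has positive power (D-TDMA is optimal) if and only if there exists a user $i$ which, with $m'=\arg\min_{m\in\{1,\ldots,M\}}\Gamma_m^{\rm ST}/g_{im}$, satisfies both (1) $\frac{\Gamma_{m'}^{\rm ST}}{g_{im'}}\le P_i^{\rm ST}$, and (2) $\frac{h_i}{g_{im'}}\ge\frac{h_j}{g_{jm'}}$ for all $j\ne i$. In that case the optimal transmit power of user $i$ is $p_i^*=\frac{\Gamma_{m'}^{\rm ST}}{g_{im'}}$ and all other users have zero power.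
   Context: $\boldsymbol{\alpha}=(h_1,\ldots,h_K,g_{11},\ldots,g_{KM})$ is a random vector of nonnegative channel power gains ($h_k$: secondary user $k$ to secondary base station; $g_{km}$: secondary user $k$ to primary receiver $m$) with a continuous, differentiable joint cumulative distribution function, the $h_k$'s and $g_{km}$'s being independent. *)

From HB Require Import structures.
From mathcomp Require Import all_boot all_order all_algebra.
From mathcomp Require Import all_classical all_reals all_analysis.
Set Implicit Arguments. Unset Strict Implicit. Unset Printing Implicit Defensive.
Import Order.TTheory GRing.Theory Num.Theory.
Import numFieldNormedType.Exports.
Local Open Scope classical_set_scope.
Local Open Scope ring_scope.

(* The channel vector alpha = (h_1..h_K, g_11..g_KM) is stored as a random
   vector indexed by 'I_(K + K*M): the first K coordinates are h_k,
   coordinate K + mxvec_index k m is g_km. *)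
Definition chan_h {R : realType} {d} {T : measurableType d} {K M : nat}
  (a : 'I_(K + K * M) -> T -> R) (t : T) (k : 'I_K) : R :=
  a (lshift (K * M) k) t.
Definition chan_g {R : realType} {d} {T : measurableType d} {K M : nat}
  (a : 'I_(K + K * M) -> T -> R) (t : T) (k : 'I_K) (m : 'I_M) : R :=
  a (rshift K (mxvec_index k m)) t.

Definition joint_cdf {R : realType} {d} {T : measurableType d}
  (P : probability T R) {n : nat} (X : 'I_n -> T -> R) (x : 'rV[R]_n) : R :=
  fine (P (\bigcap_(i in [set: 'I_n]) [set t | X i t <= x ord0 i])).

Definition mutually_independent {R : realType} {d} {T : measurableType d}
  (P : probability T R) {n : nat} (X : 'I_n -> T -> R) : Prop :=
  forall B : 'I_n -> set R, (forall i, measurable (B i)) ->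
    fine (P (\bigcap_(i in [set: 'I_n]) (X i @^-1` B i)))
    = \prod_(i < n) fine (P (X i @^-1` B i)).

Definition feasible {R : realType} {K M : nat}
  (Pst : 'I_K -> R) (Gst : 'I_M -> R) (g : 'I_K -> 'I_M -> R)
  (p : 'I_K -> R) : Prop :=
  (forall k, p k <= Pst k) /\
  (forall m, \sum_(k < K) g k m * p k <= Gst m) /\
  (forall k, 0 <= p k).

Definition objective {R : realType} {K : nat} (h : 'I_K -> R) (p : 'I_K -> R) : R :=
  ln (1 + \sum_(k < K) h k * p k).

Definition is_optimal {R : realType} {K M : nat}
  (Pst : 'I_K -> R) (Gst : 'I_M -> R) (h : 'I_K -> R) (g : 'I_K -> 'I_M -> R)
  (p : 'I_K -> R) : Prop :=
  feasible Pst Gst g p /\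
  forall q, feasible Pst Gst g q -> objective h q <= objective h p.

Definition single_user {R : realType} {K : nat} (i : 'I_K) (p : 'I_K -> R) : Prop :=
  0 < p i /\ forall j, j != i -> p j = 0.

Definition is_argmin_ratio {R : realType} {K M : nat}
  (Gst : 'I_M -> R) (g : 'I_K -> 'I_M -> R) (i : 'I_K) (m' : 'I_M) : Prop :=
  forall m, Gst m' / g i m' <= Gst m / g i m.

Definition dtdma_condition {R : realType} {K M : nat}
  (Pst : 'I_K -> R) (Gst : 'I_M -> R) (h : 'I_K -> R) (g : 'I_K -> 'I_M -> R)
  (i : 'I_K) (m' : 'I_M) : Prop :=
  is_argmin_ratio Gst g i m' /\
  Gst m' / g i m' <= Pst i /\
  (forall j, j != i -> h j / g j m' <= h i / g i m').

Definition dtdma_power {R : realType} {K M : nat}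
  (Gst : 'I_M -> R) (g : 'I_K -> 'I_M -> R) (i : 'I_K) (m' : 'I_M)
  (k : 'I_K) : R :=
  if k == i then Gst m' / g i m' else 0.

From HB Require Import structures.
From mathcomp Require Import all_boot all_order all_algebra.
From mathcomp Require Import all_classical all_reals all_analysis.
Import Order.TTheory GRing.Theory Num.Theory.
Import numFieldNormedType.Exports.
Local Open Scope classical_set_scope.
Local Open Scope ring_scope.
From mathcomp Require Import ring lra.

(* Since ln is increasing, for a fixed realization with positive gains the
   problem is the linear program of maximizing sum_k h_k p_k.  If D-TDMA with
   user i is optimal, then user i must saturate its tightest interference
   constraint m' (otherwise a second user could be switched on), and moving a
   little power from user i to a user j with a better ratio h_j / g_jm' would
   increase the objective; this move is feasible as soon as the other
   constraints of user i are slack, i.e. when Gst_m / g_im has a unique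
   minimizer.  Conversely, under (1) and (2), sum_k h_k p_k is at most
   (h_i / g_im') sum_k g_km' p_k <= h_i Gst_m' / g_im'.  The genericity
   assumptions (positive gains, no ties g_im2 = (Gst_m2 / Gst_m) g_im) hold
   almost surely: for independent X, Y with X >= 0 of continuous distribution
   function, cutting the range of X into L pieces of probability at most 1/L
   shows P(Y = lam X) <= 2/L. *)

Set Implicit Arguments. Unset Strict Implicit. Unset Printing Implicit Defensive.

Lemma sum_supp1 (R : pzSemiRingType) (K : nat) (w p : 'I_K -> R) (i : 'I_K) :
  (forall k, k != i -> p k = 0) -> \sum_(k < K) w k * p k = w i * p i.
Proof. by move=> p0; rewrite (bigD1 i) //= big1 ?addr0 // => k /p0 ->; rewrite mulr0. Qed.

Lemma exists_neq (K : nat) (i : 'I_K) : (1 < K)%N -> exists j : 'I_K, j != i.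
Proof.
rewrite -[K in (_ < K)%N]card_ord => /card_gt1P [x [y [_ _ xy]]].
by case: (eqVneq x i) => [xi|]; [exists y; rewrite -xi eq_sym | exists x].
Qed.

Lemma exists_small_step (R : realFieldType) (M : nat) (a : R) (s c : 'I_M -> R) :
  0 < a -> (forall m, 0 < s m) -> (forall m, 0 <= c m) ->
  exists2 e, 0 < e /\ e <= a & forall m, c m * e <= s m.
Proof.
move=> a_gt0 s_gt0 c_ge0.
have q_ge0 m : 0 <= c m / s m by rewrite divr_ge0 // ltW.
set D := a^-1 + \sum_(m < M) c m / s m.
have D_gt0 : 0 < D by rewrite ltr_wpDr ?sumr_ge0 ?invr_gt0.
exists D^-1.
  by rewrite invr_gt0 D_gt0 -[a in _ <= a]invrK lef_pV2 ?posrE ?invr_gt0 // lerDl sumr_ge0.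
move=> m; have s_gt0m := s_gt0 m; have qD : c m / s m <= D.
  rewrite /D (bigD1 m) //= addrCA lerDl; apply: addr_ge0; first by rewrite invr_ge0 ltW.
  by rewrite sumr_ge0.
by rewrite ler_pdivrMr // in qD; rewrite ler_pdivrMr // mulrC.
Qed.

Lemma exists_step (R : realDomainType) (a : nat -> R) (L : nat) (x : R) :
  a 0%N < x -> x <= a L -> exists2 l, (l < L)%N & a l < x <= a l.+1.
Proof.
move=> a0x; elim: L => [|L IH] xaL; first by have := lt_le_trans a0x xaL; rewrite ltxx.
case: (leP x (a L)) => [/IH [l lL xl]|aLx]; last by exists L; rewrite ?aLx.
by exists l => //; exact: ltnW.
Qed.

Lemma le0_le_2divn (R : archiFieldType) (x : R) :
  (forall L : nat, (2 <= L)%N -> x <= 2 / L%:R) -> x <= 0.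
Proof.
move=> x_le; rewrite leNgt; apply/negP => x_gt0.
pose L := (Num.Def.archi_bound (2 / x)).+2.
have L_gt0 : 0 < L%:R :> R by rewrite ltr0n.
have : 2 / x < L%:R.
  apply: lt_le_trans (archi_boundP _) _; first by rewrite divr_ge0 // ltW.
  by rewrite ler_nat /L (leq_trans (leqnSn _) (leqnSn _)).
by rewrite ltr_pdivrMr // mulrC -ltr_pdivrMr // ltNge x_le.
Qed.

Lemma divr_neq_scale (F : fieldType) (a b x y : F) :
  a != 0 -> x != 0 -> y != 0 -> y != b / a * x -> a / x != b / y.
Proof.
move=> a0 x0 y0; apply: contra; rewrite eqr_div // => /eqP aybx; apply/eqP.
by rewrite mulrAC -aybx mulrC mulKf.
Qed.

Section dtdma.
Variables (R : realType) (K M : nat).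
Variables (Pst : 'I_K -> R) (Gst : 'I_M -> R) (h : 'I_K -> R) (g : 'I_K -> 'I_M -> R).
Hypotheses (Pst_gt0 : forall k, 0 < Pst k) (Gst_gt0 : forall m, 0 < Gst m).
Hypotheses (h_gt0 : forall k, 0 < h k) (g_gt0 : forall k m, 0 < g k m).

#[local] Hint Resolve Pst_gt0 Gst_gt0 h_gt0 g_gt0 : core.

Let feasible := feasible Pst Gst g.

Definition pair_power (i j : 'I_K) (a b : R) (k : 'I_K) : R :=
  if k == i then a else if k == j then b else 0.

Lemma sum_pair_power (w : 'I_K -> R) i j a b : i != j ->
  \sum_(k < K) w k * pair_power i j a b k = w i * a + w j * b.
Proof.
move=> ij; rewrite (bigD1 i) //= (bigD1 j) 1?eq_sym //= /pair_power eqxx.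
rewrite eq_sym (negbTE ij) eqxx big1 ?addr0 // => k /andP[ki kj].
by rewrite (negbTE ki) (negbTE kj) mulr0.
Qed.

Lemma pair_power_feasible i j a b : i != j ->
  0 <= a <= Pst i -> 0 <= b <= Pst j ->
  (forall m, g i m * a + g j m * b <= Gst m) -> feasible (pair_power i j a b).
Proof.
move=> ij /andP[a_ge0 aP] /andP[b_ge0 bP] aG; split; [|split].
- move=> k; rewrite /pair_power.
  by case: eqP => [->//|_]; case: eqP => [->//|_]; exact/ltW/Pst_gt0.
- by move=> m; rewrite sum_pair_power.
- by move=> k; rewrite /pair_power; do 2?case: ifP.
Qed.

Lemma sum_ge0_feasible p : feasible p -> 0 <= \sum_(k < K) h k * p k.
Proof. by case=> _ [_ p_ge0]; rewrite sumr_ge0 // => k _; rewrite mulr_ge0 ?p_ge0 ?ltW. Qed.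

Lemma ler_objective p q : feasible p -> feasible q ->
  (objective h p <= objective h q) = (\sum_(k < K) h k * p k <= \sum_(k < K) h k * q k).
Proof.
move=> /sum_ge0_feasible p_ge0 /sum_ge0_feasible q_ge0.
by rewrite /objective ler_ln ?posrE ?ltr_pwDl // lerD2l.
Qed.

Section single_user_optimum.
Variables (i : 'I_K) (m' : 'I_M).
Hypothesis m'_argmin : is_argmin_ratio Gst g i m'.
Let r := Gst m' / g i m'.

Lemma sum_dtdma_power (w : 'I_K -> R) :
  \sum_(k < K) w k * dtdma_power Gst g i m' k = w i * r.
Proof.
rewrite (@sum_supp1 _ _ _ _ i) /dtdma_power ?eqxx // => k.
by move/negbTE ->.
Qed.

Lemma dtdma_power_feasible : r <= Pst i -> feasible (dtdma_power Gst g i m').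
Proof.
move=> rP; split; [|split].
- by move=> k; rewrite /dtdma_power; case: eqP => [->//|_]; exact/ltW/Pst_gt0.
- by move=> m; rewrite sum_dtdma_power mulrC -ler_pdivlMr.
- by move=> k; rewrite /dtdma_power; case: ifP => _ //; rewrite ltW ?divr_gt0.
Qed.

Lemma dtdma_power_optimal :
  r <= Pst i -> (forall j, j != i -> h j / g j m' <= h i / g i m') ->
  is_optimal Pst Gst h g (dtdma_power Gst g i m').
Proof.
move=> rP dominant; split=> [|q fq]; first exact: dtdma_power_feasible.
rewrite ler_objective //; last exact: dtdma_power_feasible.
rewrite (sum_dtdma_power h).
have [_ [qG q_ge0]] := fq.
set c := h i / g i m'.
have qc k : h k * q k <= c * (g k m' * q k).
  rewrite mulrA ler_wpM2r //; case: (eqVneq k i) => [->|ki].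
    by rewrite /c mulfVK ?gt_eqF.
  by rewrite -ler_pdivrMr // dominant.
apply: le_trans (ler_sum _ (fun k _ => qc k)) _.
rewrite -mulr_sumr (@le_trans _ _ (c * Gst m')) //.
  by rewrite ler_wpM2l // divr_ge0 // ltW.
by rewrite /c /r mulrAC -mulrA.
Qed.

Variable p : 'I_K -> R.
Hypotheses (p_opt : is_optimal Pst Gst h g p) (p_supp : forall k, k != i -> p k = 0).

Lemma optimal_single_le_ratio : p i <= r.
Proof.
have [_ [pG _]] := p_opt.1.
by have := pG m'; rewrite (@sum_supp1 _ _ (g^~ m') _ _ p_supp) mulrC -ler_pdivlMr.
Qed.

Lemma optimal_single_sum_le q : feasible q -> \sum_(k < K) h k * q k <= h i * p i.
Proof. by move=> fq; rewrite -(@sum_supp1 _ _ h _ _ p_supp) -ler_objective ?p_opt.2 //; case: p_opt. Qed.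

Hypothesis K_gt1 : (1 < K)%N.

Lemma ratio_le_Pst_of_optimal : r <= Pst i.
Proof.
rewrite leNgt; apply/negP => Pr.
have [[pP [_ p_ge0]] _] := p_opt.
have slack m : 0 < Gst m - g i m * p i.
  rewrite subr_gt0 mulrC -ltr_pdivlMr //.
  exact: le_lt_trans (pP i) (lt_le_trans Pr (m'_argmin m)).
have [j ji] := exists_neq i K_gt1.
have [e [e_gt0 eP] eG] := exists_small_step (Pst_gt0 j) slack (fun m => ltW (g_gt0 j m)).
have ij : i != j by rewrite eq_sym.
have fq : feasible (pair_power i j (p i) e).
  apply: pair_power_feasible; rewrite ?p_ge0 ?pP ?eP ?ltW //.
  by move=> m; have := eG m; lra.
have := optimal_single_sum_le fq; rewrite sum_pair_power //.
have : 0 < h j * e by rewrite mulr_gt0.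
lra.
Qed.

Lemma optimal_single_eq_ratio : p i = r.
Proof.
apply/eqP; rewrite eq_le optimal_single_le_ratio /=.
have := optimal_single_sum_le (dtdma_power_feasible ratio_le_Pst_of_optimal).
by rewrite (sum_dtdma_power h) ler_pM2l.
Qed.

Lemma ratio_dominant_of_optimal :
  (forall m, m != m' -> r < Gst m / g i m) ->
  forall k, k != i -> h k / g k m' <= h i / g i m'.
Proof.
move=> m'_strict k ki; rewrite leNgt; apply/negP => better.
pose s m := if m == m' then Gst m' else Gst m - g i m * r.
have s_gt0 m : 0 < s m.
  rewrite /s; case: eqVneq => [//|mm'].
  by rewrite subr_gt0 mulrC -ltr_pdivlMr // m'_strict.
have [e [e_gt0 eP] eG] := exists_small_step (Pst_gt0 k) s_gt0 (fun m => ltW (g_gt0 k m)).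
pose dl := e * g k m' / g i m'.
have dl_ge0 : 0 <= dl by rewrite divr_ge0 ?mulr_ge0 ?ltW.
have gdl : g i m' * dl = g k m' * e by rewrite /dl mulrC mulfVK ?gt_eqF // mulrC.
have gr : g i m' * r = Gst m' by rewrite /r mulrC mulfVK ?gt_eqF.
have dlr : dl <= r.
  by rewrite -(ler_pM2l (g_gt0 i m')) gdl gr; have := eG m'; rewrite /s eqxx.
have ik : i != k by rewrite eq_sym.
have fq : feasible (pair_power i k (r - dl) e).
  have rdl : 0 <= r - dl <= Pst i.
    by rewrite subr_ge0 dlr (le_trans _ ratio_le_Pst_of_optimal) // lerBlDr lerDl.
  apply: pair_power_feasible; rewrite ?rdl ?eP ?ltW // => m.
  rewrite mulrBr; have := eG m; rewrite /s.
  case: (eqVneq m m') => [->|_] /= Gm; first by rewrite gdl gr subrK.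
  apply: le_trans (_ : g i m * r + g k m * e <= _).
    by rewrite lerD2r gerBl; apply: mulr_ge0 => //; exact: ltW.
  by rewrite addrC -lerBrDr.
have := optimal_single_sum_le fq.
rewrite sum_pair_power // optimal_single_eq_ratio mulrBr -addrA gerDl addrC subr_le0.
apply/negP; rewrite -ltNge.
have -> : h i * dl = h i / g i m' * (g k m' * e) by rewrite /dl; field; rewrite gt_eqF.
have -> : h k * e = h k / g k m' * (g k m' * e) by field; rewrite gt_eqF.
by rewrite ltr_pM2r // mulr_gt0.
Qed.

End single_user_optimum.

Lemma dtdma_optimality : (1 < K)%N -> (0 < M)%N ->
  (forall i m m2, m != m2 -> Gst m / g i m != Gst m2 / g i m2) ->
  ((exists p, is_optimal Pst Gst h g p /\ exists i, single_user i p)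
     <-> (exists i m', dtdma_condition Pst Gst h g i m')) /\
  (forall i m', dtdma_condition Pst Gst h g i m' ->
     is_optimal Pst Gst h g (dtdma_power Gst g i m')).
Proof.
move=> K_gt1 M_gt0 no_tie.
have dtdma_opt i m' : dtdma_condition Pst Gst h g i m' ->
    is_optimal Pst Gst h g (dtdma_power Gst g i m').
  by case=> m'_argmin [rP dominant]; exact: dtdma_power_optimal.
split=> //; split=> [[p [p_opt [i [_ p_supp]]]] | [i [m' cond]]].
  have [m' m'_argmin] : exists m' : 'I_M, is_argmin_ratio Gst g i m'.
    have [m' _ min_m'] := @arg_minP _ R _ (Ordinal M_gt0) predT (fun m => Gst m / g i m) erefl.
    by exists m' => m; exact: min_m'.
  exists i, m'; split; [exact: m'_argmin | split].
    apply: (ratio_le_Pst_of_optimal m'_argmin p_opt p_supp K_gt1).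
  apply: (ratio_dominant_of_optimal m'_argmin p_opt p_supp K_gt1) => m mm'.
  by rewrite lt_neqAle m'_argmin andbT no_tie // eq_sym.
exists (dtdma_power Gst g i m'); split; first exact: dtdma_opt.
exists i; split; first by rewrite /dtdma_power eqxx divr_gt0.
by move=> j /negbTE ji; rewrite /dtdma_power ji.
Qed.

End dtdma.

Section probability.
Context d (T : measurableType d) (R : realType) (P : probability T R).

Definition pr (A : set T) : R := fine (P A).

Lemma prE A : measurable A -> P A = (pr A)%:E.
Proof. by move=> mA; rewrite /pr fineK // fin_num_measure. Qed.

Lemma pr_ge0 A : 0 <= pr A.
Proof. exact: fine_ge0. Qed.

Lemma pr_le1 A : measurable A -> pr A <= 1.
Proof. by move=> mA; rewrite -lee_fin -prE // probability_le1. Qed.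

Lemma pr_le A B : measurable A -> measurable B -> A `<=` B -> pr A <= pr B.
Proof. by move=> mA mB AB; rewrite -lee_fin -!prE // le_measure ?inE. Qed.

Lemma prU A B : measurable A -> measurable B -> pr (A `|` B) <= pr A + pr B.
Proof.
move=> mA mB; rewrite -lee_fin EFinD -!prE //; last exact: measurableU.
exact: measureU2.
Qed.

Lemma pr_bigsetU (S : nat -> set T) (L : nat) : (forall l, measurable (S l)) ->
  pr (\big[setU/set0]_(l < L) S l) <= \sum_(l < L) pr (S l).
Proof.
move=> mS; elim: L => [|L IH]; first by rewrite !big_ord0 /pr measure0.
rewrite !big_ord_recr /= (le_trans (prU _ _)) ?lerD2r //.
by apply: bigsetU_measurable => l _.
Qed.

Lemma prD A B : measurable A -> measurable B -> B `<=` A -> pr (A `\` B) = pr A - pr B.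
Proof.
move=> mA mB BA; apply: EFin_inj; rewrite EFinB -!prE //; last exact: measurableD.
by rewrite measureD ?setIidr // (le_lt_trans (probability_le1 P mA)) // ltry.
Qed.

Lemma prC A : measurable A -> pr (~` A) = 1 - pr A.
Proof.
move=> mA; apply: EFin_inj; rewrite EFinB -!prE //; last exact: measurableC.
exact: probability_setC.
Qed.

Lemma pr_setT : pr setT = 1.
Proof. by rewrite /pr probability_setT. Qed.

Lemma measurable_le (X : {mfun T >-> R}) r : measurable [set t | X t <= r].
Proof. exact: (measurable_funPTI X (measurable_realfun.closed_measurable (@closed_le R r))). Qed.

Lemma measurable_eq_scale (X Y : {mfun T >-> R}) lam :
  measurable [set t | Y t = lam * X t].
Proof.
have -> : [set t | Y t = lam * X t] = (fun t => Y t - lam * X t) @^-1` [set 0].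
  by apply/seteqP; split => t /= => [->|/eqP]; rewrite ?subrr // subr_eq0 => /eqP.
have mf : measurable_fun setT (fun t => Y t - lam * X t).
  apply: measurable_realfun.measurable_funB; first exact: measurable_funPT.
  apply: measurable_realfun.measurable_funM; first exact: measurable_cst.
  exact: measurable_funPT.
by rewrite -[_ @^-1` _]setTI; apply: mf => //; exact: measurable_set1.
Qed.

Definition cdfR (X : {RV P >-> R}) (r : R) : R := fine (cdf X r).

Lemma cdfRE (X : {RV P >-> R}) r : cdfR X r = pr [set t | X t <= r].
Proof.
by rewrite /cdfR /cdf /distribution /pushforward /pr; congr (fine (P _)).
Qed.

Lemma cdfR_ge0 (X : {RV P >-> R}) r : 0 <= cdfR X r.
Proof. exact: fine_ge0. Qed.

Lemma cdfR_le1 (X : {RV P >-> R}) r : cdfR X r <= 1.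
Proof. by rewrite cdfRE (pr_le1 (measurable_le X r)). Qed.

Lemma cdfR_le (X : {RV P >-> R}) r s : r <= s -> cdfR X r <= cdfR X s.
Proof. by move=> rs; rewrite fine_le ?fin_num_measure // cdf_nondecreasing. Qed.

Lemma exists_cdfR_ge (X : {RV P >-> R}) e : 0 < e -> exists r, 1 - e <= cdfR X r.
Proof.
move=> e_gt0; have e1 : 1 - e < 1 by rewrite gtrBl.
have near_y : \forall r \near +oo, 1 - e <= cdfR X r.
  exact: cvgr_ge (fine_cvg (cvg_cdfy1 X)) _ e1.
by have [r] := filter_ex near_y; exists r.
Qed.

Lemma pr_preimage_itv_oc (X : {RV P >-> R}) p q :
  p <= q -> pr (X @^-1` `]p, q]) = cdfR X q - cdfR X p.
Proof.
move=> pq; rewrite !cdfRE -prD; try exact: measurable_le; last first.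
  by move=> t /le_trans; apply.
congr pr; apply/seteqP; split => t /=; rewrite in_itv /=.
  by case/andP => pX Xq; split => //; apply/negP; rewrite -ltNge.
by case=> Xq /negP; rewrite -ltNge => pX; apply/andP.
Qed.

Section nonnegative.
Variable X : {RV P >-> R}.
Hypothesis X_ge0 : forall t, 0 <= X t.

Lemma cdfR_lt0 x : x < 0 -> cdfR X x = 0.
Proof.
move=> x_lt0; rewrite cdfRE /pr.
suff -> : [set t | X t <= x] = set0 by rewrite measure0.
by apply/seteqP; split => // t /= Xx; have := X_ge0 t; lra.
Qed.

Hypothesis X_cont : continuous (cdfR X).

Lemma ae_gt0 : {ae P, forall t, 0 < X t}.
Proof.
have F0 : cdfR X 0 = 0.
  have left0 : cdfR X x @[x --> 0^'-] --> 0.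
    apply: cvg_near_cst; near=> x; apply: cdfR_lt0.
    by near: x; exact: nbhs_left_lt.
  exact: cvg_unique (cvg_at_left_filter (@X_cont 0)) left0.
exists [set t | X t <= 0]; split; first exact: measurable_le.
  by rewrite (prE (measurable_le X 0)) -cdfRE F0.
by move=> t /= /negP; rewrite -leNgt.
Unshelve. all: by end_near.
Qed.

Lemma exists_cdfR_grid L : (2 <= L)%N -> exists a : nat -> R,
  [/\ cdfR X (a 0%N) = 0, 1 - cdfR X (a L) <= L%:R^-1 &
     forall l, (l < L)%N -> a l <= a l.+1 /\ cdfR X (a l.+1) - cdfR X (a l) <= L%:R^-1].
Proof.
move=> L_ge2; set il := L%:R^-1.
have L_gt0 : 0 < L%:R :> R by rewrite ltr0n (leq_trans _ L_ge2).
have il_gt0 : 0 < il by rewrite invr_gt0.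
have il_le : 2 * il <= 1 by rewrite ler_pdivrMr // mul1r ler_nat.
have [b Fb] := exists_cdfR_ge X il_gt0.
have Fb_le1 := cdfR_le1 X b.
have F_1 : cdfR X (-1) = 0 by rewrite cdfR_lt0 // ltrN10.
have b_ge : -1 <= b.
  rewrite leNgt; apply/negP => b_lt; move: Fb; rewrite cdfR_lt0; first lra.
  exact: lt_trans b_lt (ltrN10 R).
(* a l is an (l / L)-quantile of X cut off at b, by the intermediate value theorem. *)
have /choice [a Fa] l : exists c, (l <= L)%N -> cdfR X c = l%:R * il * cdfR X b.
  case: (leqP l L) => lL; last by exists 0.
  have lil : 0 <= l%:R * il <= 1.
    by rewrite /il mulr_ge0 ?invr_ge0 ?ler0n //= ler_pdivrMr // mul1r ler_nat.
  have [|c _ Fc] := IVT (v := l%:R * il * cdfR X b) b_ge (continuous_subspaceT X_cont).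
    rewrite F_1 min_l ?max_r ?mulr_ge0 ?ler_piMl //; lra.
  by exists c.
have step l : (l < L)%N -> cdfR X (a l.+1) - cdfR X (a l) = il * cdfR X b.
  by move=> lL; rewrite !Fa ?(ltnW lL) // -natr1; ring.
exists a; split; first by rewrite Fa // !mul0r.
  by rewrite Fa // mulfV ?gt_eqF // mul1r; lra.
move=> l lL; split; last by rewrite step // ler_piMr // ltW.
rewrite leNgt; apply/negP => /ltW /(cdfR_le X); have := step l lL.
have : 0 < il * cdfR X b by rewrite mulr_gt0 //; lra.
lra.
Qed.

Section scale.
Variables (Y : {RV P >-> R}) (lam : R).
Hypothesis lam_gt0 : 0 < lam.
Hypothesis XY_indep : forall A B, measurable A -> measurable B ->
  pr (X @^-1` A `&` Y @^-1` B) = pr (X @^-1` A) * pr (Y @^-1` B).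

Lemma pr_eq_scale_le L : (2 <= L)%N -> pr [set t | Y t = lam * X t] <= 2 / L%:R.
Proof.
move=> L_ge2; have [a [Fa0 FaL Fstep]] := exists_cdfR_grid L_ge2.
pose S l := X @^-1` `]a l, a l.+1] `&` Y @^-1` `]lam * a l, lam * a l.+1].
have mS l : measurable (S l).
  by apply: measurableI; apply: measurable_funPTI; exact: measurable_itv.
have mU : measurable (\big[setU/set0]_(l < L) S l) by apply: bigsetU_measurable.
have cover : [set t | Y t = lam * X t] `<=`
    [set t | X t <= a 0%N] `|` ~` [set t | X t <= a L] `|` \big[setU/set0]_(l < L) S l.
  move=> t /= Yt; case: (leP (X t) (a 0%N)) => [|Xa0]; first by left; left.
  case: (leP (X t) (a L)) => [XaL|_]; last by left; right.
  right; have [l lL /andP[Xl Xl1]] := exists_step Xa0 XaL.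
  rewrite -bigcup_mkord; exists l => //; rewrite /S /= !in_itv /= Yt Xl Xl1.
  by rewrite ltr_pM2l // ler_pM2l // Xl Xl1.
have pS l : (l < L)%N ->
    pr (S l) <= L%:R^-1 * (cdfR Y (lam * a l.+1) - cdfR Y (lam * a l)).
  move=> lL; have [al_le Fal] := Fstep l lL.
  rewrite XY_indep ?measurable_itv // !pr_preimage_itv_oc ?ler_pM2l //.
  by rewrite ler_wpM2r // subr_ge0 cdfR_le // ler_pM2l.
have sumS : \sum_(l < L) pr (S l) <= L%:R^-1.
  pose dF l := cdfR Y (lam * a l.+1) - cdfR Y (lam * a l).
  rewrite (@le_trans _ _ (\sum_(l < L) L%:R^-1 * dF l)) //.
    by apply: ler_sum => l _; exact: pS.
  rewrite -mulr_sumr -(big_mkord xpredT dF) /dF.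
  rewrite telescope_sumr // ler_piMr ?invr_ge0 ?ler0n //.
  by have := cdfR_le1 Y (lam * a L); have := cdfR_ge0 Y (lam * a 0%N); lra.
have mA0 := measurable_le X (a 0%N).
have mAL := measurableC (measurable_le X (a L)).
have mA0AL : measurable ([set t | X t <= a 0%N] `|` ~` [set t | X t <= a L]).
  exact: measurableU.
have E_le := pr_le (measurable_eq_scale X Y lam) (measurableU _ _ mA0AL mU) cover.
have U3_le := prU mA0AL mU.
have U2_le := prU mA0 mAL.
have U_le := pr_bigsetU L mS.
rewrite (prC (measurable_le X (a L))) -!cdfRE Fa0 in U2_le.
have : 2 / L%:R = L%:R^-1 + L%:R^-1 :> R by rewrite mulrDl mul1r.
lra.
Qed.

Lemma ae_neq_scale : {ae P, forall t, Y t != lam * X t}.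
Proof.
exists [set t | Y t = lam * X t]; split; first exact: measurable_eq_scale.
  rewrite (prE (measurable_eq_scale X Y lam)); congr (_%:E); apply/eqP.
  by rewrite eq_le pr_ge0 andbT le0_le_2divn // => L; exact: pr_eq_scale_le.
by move=> t /= /negP/negbNE/eqP.
Qed.

End scale.
End nonnegative.

Section independence.
Variables (n : nat) (X : 'I_n -> {RV P >-> R}).
Hypothesis indep : mutually_independent P (fun i => X i : T -> R).

Lemma joint_cdf_indep r :
  joint_cdf P (fun i => X i : T -> R) r = \prod_(i < n) cdfR (X i) (r ord0 i).
Proof.
rewrite (eq_bigr _ (fun i _ => cdfRE (X i) (r ord0 i))).
exact: indep (fun i => measurable_realfun.closed_measurable (@closed_le R (r ord0 i))).
Qed.

Lemma continuous_cdfR_of_joint c :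
  continuous (joint_cdf P (fun i => X i : T -> R)) -> continuous (cdfR (X c)).
Proof.
move=> joint_cont.
have /choice [N N_half] j : exists r, 1 - 2^-1 <= cdfR (X j) r.
  by apply: exists_cdfR_ge; rewrite invr_gt0.
pose C := \prod_(j < n | j != c) cdfR (X j) (N j).
have C_gt0 : 0 < C by apply: prodr_gt0 => j _; apply: lt_le_trans (N_half j); lra.
pose line x : 'rV[R]_n := x *: \row_j (j == c)%:R + \row_j (if j == c then 0 else N j).
have -> : cdfR (X c) = (fun y => y / C) \o joint_cdf P (fun i => X i : T -> R) \o line.
  apply: funext => x /=; rewrite joint_cdf_indep (bigD1 c) //= !mxE eqxx mulr1 addr0.
  rewrite (eq_bigr (fun j => cdfR (X j) (N j))) ?mulfK ?gt_eqF //.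
  by move=> j /negbTE jc; rewrite !mxE jc mulr0 add0r.
move=> x; apply: continuous_comp.
  by apply: continuousD; [exact: scalel_continuous | exact: cst_continuous].
by apply: continuous_comp; [exact: joint_cont | exact: mulrr_continuous].
Qed.

Lemma indep_pair a b : a != b -> forall A B, measurable A -> measurable B ->
  pr (X a @^-1` A `&` X b @^-1` B) = pr (X a @^-1` A) * pr (X b @^-1` B).
Proof.
move=> ab A B mA mB.
pose S j := if j == a then A else if j == b then B else setT.
have mS j : measurable (S j) by rewrite /S; case: ifP => //; case: ifP.
have Sa : S a = A by rewrite /S eqxx.
have Sb : S b = B by rewrite /S eq_sym (negbTE ab) eqxx.
have <- : \bigcap_(j in [set: 'I_n]) (X j @^-1` S j) = X a @^-1` A `&` X b @^-1` B.
  apply/seteqP; split=> [t St | t [At Bt] j _]; first by rewrite -Sa -Sb; split; apply: St.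
  by rewrite /S; case: eqP => [->//|_]; case: eqP => [->//|_].
rewrite [pr _]indep // (bigD1 a) //= (bigD1 b) 1?eq_sym //= Sa Sb big1 ?mulr1 //.
move=> j /andP[ja jb]; rewrite /S (negbTE ja) (negbTE jb) preimage_setT.
exact: pr_setT.
Qed.

Hypotheses (X_ge0 : forall i t, 0 <= X i t).
Hypothesis joint_cont : continuous (joint_cdf P (fun i => X i : T -> R)).

Lemma ae_gt0_family : {ae P, forall t i, 0 < X i t}.
Proof.
apply: filter_forall => i.
exact: ae_gt0 (@X_ge0 i) (continuous_cdfR_of_joint joint_cont).
Qed.

Lemma ae_neq_scale_family (I : finType) (a b : I -> 'I_n) (lam : I -> R) :
  (forall q, 0 < lam q) ->
  {ae P, forall t q, a q != b q -> X (b q) t != lam q * X (a q) t}.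
Proof.
move=> lam_gt0; apply: filter_forall => q; case: (eqVneq (a q) (b q)) => [_|ab].
  by apply: aeW.
have := ae_neq_scale (@X_ge0 (a q)) (continuous_cdfR_of_joint (c := a q) joint_cont)
  (lam_gt0 q) (indep_pair ab).
by apply: filterS => t.
Qed.

End independence.

End probability.

Lemma rshift_mxvec_index_neq (K M : nat) (k : 'I_K) (m m2 : 'I_M) :
  m != m2 -> rshift K (mxvec_index k m) != rshift K (mxvec_index k m2).
Proof. by apply: contra => /eqP /rshift_inj /cast_ord_inj /enum_rank_inj [->]. Qed.

Unset Implicit Arguments.

Theorem theorem3p4 (R : realType) (d : measure_display) (T : measurableType d)
  (P : probability T R) (K M : nat)
  (alpha : 'I_(K + K * M) -> {RV P >-> R})
  (Pst : 'I_K -> R) (Gst : 'I_M -> R) :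
  (2 <= K)%N -> (0 < M)%N ->
  (forall k, 0 < Pst k) -> (forall m, 0 < Gst m) ->
  (forall i t, 0 <= alpha i t) ->
  continuous (joint_cdf P (fun i => alpha i : T -> R)) ->
  (forall x, differentiable (joint_cdf P (fun i => alpha i : T -> R)) x) ->
  mutually_independent P (fun i => alpha i : T -> R) ->
  {ae P, forall t,
     let h := chan_h (fun i => alpha i : T -> R) t in
     let g := chan_g (fun i => alpha i : T -> R) t in
     ((exists p, is_optimal Pst Gst h g p /\ exists i, single_user i p)
       <-> (exists i m', dtdma_condition Pst Gst h g i m')) /\
     (forall i m', dtdma_condition Pst Gst h g i m' ->
        is_optimal Pst Gst h g (dtdma_power Gst g i m'))}.
Proof.
move=> K_gt1 M_gt0 Pst_gt0 Gst_gt0 alpha_ge0 joint_cont _ indep.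
pose gidx (q : 'I_K * 'I_M * 'I_M) (m : 'I_M) := rshift K (mxvec_index q.1.1 m).
have no_tie := ae_neq_scale_family indep alpha_ge0 joint_cont
  (fun q => gidx q q.1.2) (fun q => gidx q q.2) (fun q => divr_gt0 (Gst_gt0 q.2) (Gst_gt0 q.1.2)).
apply: filterS2 (ae_gt0_family indep alpha_ge0 joint_cont) no_tie => t alpha_gt0 {}no_tie /=.
apply: dtdma_optimality => // [k|k m|i m m2 mm2]; rewrite ?alpha_gt0 //.
apply: divr_neq_scale; try by rewrite gt_eqF ?alpha_gt0.
exact: (no_tie (i, m, m2) (rshift_mxvec_index_neq i mm2)).
Qed.
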